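(* Let $m \ge 2$, let $\varepsilon \le \frac{1}{2^{3m}\cdot 4m}$ be a power of 2, and let $\mathcal{G} = \{2^{-i}\varepsilon j : i \in \mathbb{Z},\ j \in \{1,\dots,2/\varepsilon^2 - 1\}\} \cap (0,1)$. Suppose $z, x_1,\dots,x_m \in \mathcal{G}$, let $M = \max_i x_i$, and suppose $\varepsilon M \le z \le \min_i x_i$. Then there exist $a_1,\dots,a_m,b_1,\dots,b_m$ such that for every $i$: (i) $a_i, b_i \in \mathcal{G} \cup \{0\}$; (ii) $x_i = z + a_i + b_i$; (iii) each of $a_i, b_i$ is either $0$ or at least $\varepsilon^3 M/2$; and (iv) $a_i \le \varepsilon z$. *)

From HB Require Import structures.
From mathcomp Require Import all_boot all_order all_algebra.
Set Implicit Arguments. Unset Strict Implicit. Unset Printing Implicit Defensive.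
Import Order.TTheory GRing.Theory Num.Theory.
Local Open Scope ring_scope.

Definition pow2 {R : realFieldType} (eps : R) : Prop :=
  exists k : int, eps = (2%:R : R) ^ k.

Definition grid {R : realFieldType} (eps : R) (x : R) : Prop :=
  (exists (i : int) (j : nat),
      (1 <= j)%N /\ (j%:R <= 2 / eps ^+ 2 - 1) /\
      x = (2%:R : R) ^ (- i) * eps * j%:R)
  /\ 0 < x /\ x < 1.

From HB Require Import structures.
From mathcomp Require Import all_boot all_order all_algebra.
From mathcomp Require Import zify ring lra.
Import Order.TTheory GRing.Theory Num.Theory.
Local Open Scope ring_scope.

(* Write eps = 2^-K and bring z and x to a common dyadic unit w = 2^e, so that
   z = w Z and x = w X with Z < N = 2/eps^2.  Let 2^t <= Z < 2^(t+1) and take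
   the block U = 2^(t-K) (truncated at 1); dividing X - Z = Q U + A gives
   a = w A and b = w U Q.  The block is small enough that A <= eps Z, and large
   enough that x <= M <= z/eps forces Q < N, so both parts lie on the grid.
   Every nonzero part is at least w, and w >= eps^3 M/2 since eps M <= z < w N. *)

Lemma dyadic_split {K Z X : nat} :
  (0 < Z)%N -> (Z <= X)%N -> (X <= Z * 2 ^ K)%N ->
  exists s A Q : nat,
    [/\ X = (Z + Q * 2 ^ s + A)%N, (A * 2 ^ K <= Z)%N & (Q < 2 ^ (2 * K + 1))%N].
Proof.
move=> Z_gt0 le_ZX le_XZK.
set t := trunc_log 2 Z.
have /andP[le_tZ lt_Zt] : (2 ^ t <= Z < 2 ^ t.+1)%N.
  exact: trunc_log_bounds.
pose s := (t - K)%N; pose U := (2 ^ s)%N.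
have U_gt0 : (0 < U)%N by rewrite expn_gt0.
exists s, ((X - Z) %% U)%N, ((X - Z) %/ U)%N; split.
- by rewrite -addnA -divn_eq subnKC.
- have [s0|s_gt0] := posnP s; first by rewrite /U s0 expn0 modn1.
  apply: leq_trans le_tZ; have -> : t = (s + K)%N by rewrite subnK // ltnW // -subn_gt0.
  by rewrite expnD leq_mul2r ltnW ?ltn_pmod ?orbT.
- rewrite -(ltn_pmul2r U_gt0); apply: leq_ltn_trans (leq_divM _ _) _.
  apply: leq_ltn_trans (leq_subr _ _) _; apply: leq_ltn_trans le_XZK _.
  apply: leq_trans (_ : (2 ^ t.+1 * 2 ^ K <= _)%N).
    by rewrite ltn_pmul2r ?expn_gt0.
  by rewrite -!expnD leq_pexp2l //; lia.
Qed.

Lemma pow2_mul_nat_common_exponent (R : realFieldType) (p1 p2 : int) (n1 n2 : nat) :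
  exists (e : int) (k1 k2 : nat),
    [/\ 2%:R ^ p1 * n1%:R = 2%:R ^ e * (n1 * 2 ^ k1)%:R :> R,
        2%:R ^ p2 * n2%:R = 2%:R ^ e * (n2 * 2 ^ k2)%:R :> R
      & k1 = 0%N \/ k2 = 0%N].
Proof.
wlog le_p12 : p1 p2 n1 n2 / p1 <= p2 => [sym|].
  have [|/ltW le_p21] := lerP p1 p2; first exact: sym.
  have [e [k2 [k1 [h2 h1 k0]]]] := sym p2 p1 n2 n1 le_p21.
  by exists e, k1, k2; split=> //; case: k0; [right|left].
exists p1, 0%N, `|p2 - p1|%N; split; [by rewrite muln1 | | by left].
rewrite natrM natrX exprnP [_ * 2%:R ^ _]mulrC mulrA -expfzDr ?pnatr_eq0 //.
by congr (_ ^ _ * _); lia.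
Qed.

Lemma eq0_or_ge_mul_nat (R : numDomainType) (c w : R) (n : nat) :
  0 <= w -> c <= w -> w * n%:R = 0 \/ c <= w * n%:R.
Proof.
case: n => [|n] w_ge0 le_cw; first by left; rewrite mulr0.
by right; apply: le_trans le_cw _; rewrite ler_peMr // ler1n.
Qed.

Definition admissible_split {R : realFieldType} (eps M z x a b : R) : Prop :=
  (grid eps a \/ a = 0) /\ (grid eps b \/ b = 0) /\
  x = z + a + b /\
  (a = 0 \/ eps ^+ 3 * M / 2%:R <= a) /\
  (b = 0 \/ eps ^+ 3 * M / 2%:R <= b) /\
  a <= eps * z.

Section DyadicGrid.
Context {R : realFieldType} {K : nat}.
Local Notation eps := ((2%:R : R) ^ (- K%:Z)).
Local Notation N := (2 ^ (2 * K + 1))%N.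

Lemma eps_natV : eps = (2 ^ K)%:R^-1.
Proof. by rewrite -exprnN natrX. Qed.

Lemma two_div_eps_sqr : 2 / eps ^+ 2 = N%:R.
Proof. by rewrite eps_natV exprVn invrK -natrX -natrM -expnM -expnS addn1 mulnC. Qed.

Lemma gridP (y : R) : grid eps y <->
  (exists (p : int) (n : nat), (0 < n < N)%N /\ y = 2%:R ^ p * n%:R) /\ 0 < y /\ y < 1.
Proof.
have grid_bound (n : nat) : (n%:R <= 2 / eps ^+ 2 - 1) = (n < N)%N.
  by rewrite two_div_eps_sqr -(@natrB R _ 1%N) ?expn_gt0 // ler_nat; lia.
split=> -[y_rep y01]; split=> //.
- have [i [n [n_gt0 [n_le ->]]]] := y_rep.
  exists (- i - K%:Z), n; rewrite -grid_bound n_gt0 n_le; split=> //.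
  by rewrite -expfzDr ?pnatr_eq0 //; congr (_ ^ _ * _); lia.
- have [p [n [/andP[n_gt0 n_lt] ->]]] := y_rep.
  exists (- p - K%:Z), n; do !split; rewrite ?grid_bound //.
  by rewrite -expfzDr ?pnatr_eq0 //; congr (_ ^ _ * _); lia.
Qed.

Lemma grid_or0_pow2_mul_nat (p : int) (n : nat) :
  (n < N)%N -> (2%:R : R) ^ p * n%:R < 1 ->
  grid eps (2%:R ^ p * n%:R) \/ 2%:R ^ p * n%:R = 0 :> R.
Proof.
case: n => [|n] lt_nN lt_y1; first by right; rewrite mulr0.
left; apply/gridP; split; first by exists p, n.+1.
by rewrite mulr_gt0 ?ltr0n ?exprz_gt0.
Qed.

Lemma eps3M_le_pow2 {e : int} {Z : nat} {M : R} :
  (Z < N)%N -> eps * M <= 2%:R ^ e * Z%:R -> eps ^+ 3 * M / 2%:R <= 2%:R ^ e.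
Proof.
move=> lt_ZN le_epsM.
have eps_gt0 : 0 < eps by rewrite exprz_gt0.
have le_ZN : 2%:R ^ e * Z%:R <= 2%:R ^ e * (2 / eps ^+ 2).
  by rewrite two_div_eps_sqr ler_pM2l ?exprz_gt0 // ler_nat ltnW.
have -> : eps ^+ 3 * M / 2%:R = (eps * M) * (eps ^+ 2 / 2%:R) by ring.
have -> : 2%:R ^ e = 2%:R ^ e * (2 / eps ^+ 2) * (eps ^+ 2 / 2%:R).
  by field; rewrite ?expf_neq0 ?gt_eqF.
apply: ler_wpM2r; last exact: le_trans le_epsM le_ZN.
by rewrite divr_ge0 ?exprn_ge0 ?ltW.
Qed.

Lemma exists_admissible_split_dyadic (e : int) (X Z : nat) (M : R) :
  (0 < Z)%N -> (Z <= X)%N -> (Z < N)%N -> (2%:R : R) ^ e * X%:R < 1 ->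
  eps * M <= 2%:R ^ e * Z%:R -> 2%:R ^ e * X%:R <= M ->
  exists a b, admissible_split eps M (2%:R ^ e * Z%:R) (2%:R ^ e * X%:R) a b.
Proof.
move=> Z_gt0 le_ZX lt_ZN lt_x1 le_epsM_z le_xM.
set w : R := 2%:R ^ e.
have w_gt0 : 0 < w by rewrite exprz_gt0.
have eps_gt0 : 0 < eps by rewrite exprz_gt0.
have le_XZK : (X <= Z * 2 ^ K)%N.
  have ME : M = eps * M * (2 ^ K)%:R.
    by rewrite eps_natV mulrAC mulVf ?mul1r // pnatr_eq0 expn_eq0.
  rewrite -(ler_nat R) -(ler_pM2l w_gt0) natrM mulrA.
  by apply: le_trans le_xM _; rewrite {1}ME ler_wpM2r.
have [s [A [Q [eX le_AZ lt_QN]]]] := dyadic_split Z_gt0 le_ZX le_XZK.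
pose a := w * A%:R; pose b : R := 2%:R ^ (e + s%:Z) * Q%:R.
have wsE : 2%:R ^ (e + s%:Z) = w * (2 ^ s)%:R :> R.
  by rewrite expfzDr ?pnatr_eq0 // natrX exprnP.
have xE : w * X%:R = w * Z%:R + a + b by rewrite eX /a /b wsE !natrD natrM; ring.
have [z_ge0 a_ge0 b_ge0] : [/\ 0 <= w * Z%:R, 0 <= a & 0 <= b].
  by split; rewrite mulr_ge0 ?ler0n ?ltW ?exprz_gt0.
have le_w_ws : w <= 2%:R ^ (e + s%:Z).
  by rewrite wsE ler_peMr ?ler1n ?expn_gt0 // ltW.
have le_step_w := eps3M_le_pow2 lt_ZN le_epsM_z.
rewrite xE in lt_x1; exists a, b; rewrite /admissible_split xE; do !split.
- apply: grid_or0_pow2_mul_nat; last by rewrite -/w -/a; lra.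
  apply: leq_ltn_trans lt_ZN; apply: leq_trans le_AZ.
  by rewrite leq_pmulr ?expn_gt0.
- by apply: grid_or0_pow2_mul_nat; rewrite // -/b; lra.
- exact: eq0_or_ge_mul_nat (ltW w_gt0) le_step_w.
- by apply: eq0_or_ge_mul_nat (le_trans le_step_w le_w_ws); rewrite exprz_ge0.
- rewrite /a mulrCA ler_pM2l // eps_natV mulrC ler_pdivlMr ?ltr0n ?expn_gt0 //.
  by rewrite -natrM ler_nat.
Qed.

Lemma exists_admissible_split (z x M : R) :
  grid eps z -> grid eps x -> eps * M <= z -> z <= x -> x <= M ->
  exists a b, admissible_split eps M z x a b.
Proof.
move=> /gridP[[pz [nz [/andP[nz_gt0 lt_nzN] ->]]] _].
move=> /gridP[[px [nx [/andP[_ lt_nxN] ->]]] [_]].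
(* One numerator is kept, so Z < N (for x's, because Z <= X). *)
have [e [kz [kx [-> -> k0]]]] := pow2_mul_nat_common_exponent R pz px nz nx.
move=> lt_x1 le_epsM_z le_zx le_xM.
have le_ZX : (nz * 2 ^ kz <= nx * 2 ^ kx)%N.
  by rewrite -(ler_nat R) -(ler_pM2l (exprz_gt0 e (ltr0n R 2))).
apply: exists_admissible_split_dyadic => //; first by rewrite muln_gt0 nz_gt0 expn_gt0.
by case: k0 => [-> | kx0]; [rewrite muln1 | rewrite (leq_ltn_trans le_ZX) // kx0 muln1].
Qed.
End DyadicGrid.

Lemma pow2_le1_neg_exponent {R : realFieldType} {eps : R} :
  pow2 eps -> eps <= 1 -> exists K : nat, eps = 2%:R ^ (- K%:Z).
Proof.
case=> -[n|n] -> le_eps1; last by exists n.+1; rewrite NegzE.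
exists 0%N; case: n le_eps1 => // n.
by rewrite -exprnP leNgt exprn_egt1 ?ltr1n.
Qed.

Theorem claim7 (R : realFieldType) (m : nat) (eps z M : R) (x : 'I_m -> R) :
  (2 <= m)%N ->
  pow2 eps ->
  eps <= 1 / ((2%:R) ^+ (3 * m) * (4 * m)%:R) ->
  grid eps z ->
  (forall i, grid eps (x i)) ->
  (exists i, M = x i) -> (forall i, x i <= M) ->
  eps * M <= z -> (forall i, z <= x i) ->
  exists a b : 'I_m -> R, forall i,
    (grid eps (a i) \/ a i = 0) /\ (grid eps (b i) \/ b i = 0) /\
    x i = z + a i + b i /\
    (a i = 0 \/ eps ^+ 3 * M / 2%:R <= a i) /\
    (b i = 0 \/ eps ^+ 3 * M / 2%:R <= b i) /\
    a i <= eps * z.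
Proof.
(* The split is built coordinatewise. *)
move=> le2m pow2_eps le_eps hz hx _ le_xM le_epsM_z le_zx.
have eps_le1 : eps <= 1.
  apply: le_trans le_eps _.
  by rewrite -natrX -natrM div1r invf_le1 ?ler1n ?ltr0n muln_gt0 expn_gt0 /=; lia.
have [K eps_pow] := pow2_le1_neg_exponent pow2_eps eps_le1; subst eps.
have /fin_all_exists[a /fin_all_exists[b split_ab]] :
    forall i, exists a b, admissible_split (2%:R ^ (- K%:Z)) M z (x i) a b.
  by move=> i; apply: exists_admissible_split.
by exists a, b.
Qed.
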